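(* Let $G$ be a strongly antimagic graph, let $k\ge1$, and let $V_k=\{v\in V(G):\deg(v)=k\}$. Let $G'$ be the graph obtained from $G$ by attaching, for each vertex $v\in V_k$, a new vertex $v'$ together with the edge $vv'$ (distinct new vertices for distinct $v$). Then $G'$ is strongly antimagic.
   Context: All graphs are finite and simple. For a graph $G=(V,E)$ and a bijection $f:E\to\{1,\dots,|E|\}$, the vertex sum is $\varphi_f(u)=\sum_{e\in E(u)}f(e)$ with $E(u)$ the set of edges incident to $u$; $f$ is strongly antimagic if the $\varphi_f(u)$ are pairwise distinct over $V$ and $\deg(u)<\deg(v)$ implies $\varphi_f(u)<\varphi_f(v)$; a graph is strongly antimagic if it admits such a labeling. *)

From mathcomp Require Import all_boot.
Set Implicit Arguments. Unset Strict Implicit. Unset Printing Implicit Defensive.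

(* A finite simple graph: vertex set a finType T, adjacency a symmetric
   irreflexive relation e. Edges are the 2-element sets {x,y} with e x y. *)
Definition edges (T : finType) (e : rel T) : {set {set T}} :=
  [set s : {set T} | [exists x : T, exists y : T, e x y && (s == [set x; y])]].

Definition deg (T : finType) (e : rel T) (v : T) : nat := #|[set y | e v y]|.

Definition vsum (T : finType) (e : rel T) (f : {set T} -> nat) (u : T) : nat :=
  \sum_(y | e u y) f [set u; y].

Definition edge_labeling (T : finType) (e : rel T) (f : {set T} -> nat) : Prop :=
  {in edges e &, injective f} /\
  (forall ed, ed \in edges e -> 1 <= f ed <= #|edges e|).

Definition strongly_antimagic_labeling (T : finType) (e : rel T)
    (f : {set T} -> nat) : Prop :=
  [/\ edge_labeling e f,
      injective (vsum e f)
    & forall u v, deg e u < deg e v -> vsum e f u < vsum e f v].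

Definition strongly_antimagic (T : finType) (e : rel T) : Prop :=
  exists f, strongly_antimagic_labeling e f.

(* G' : add a pendant vertex v' (= inr v) to each vertex v of degree k. *)
Definition ext_vertex (T : finType) (e : rel T) (k : nat) : finType :=
  (T + {v : T | deg e v == k})%type.

Definition ext_rel (T : finType) (e : rel T) (k : nat) : rel (ext_vertex e k) :=
  fun a b =>
    match a, b with
    | inl x, inl y => e x y
    | inl x, inr w => x == val w
    | inr w, inl x => val w == x
    | inr _, inr _ => false
    end.
Arguments ext_rel {T} e k _ _.
Arguments ext_vertex {T} e k.

From mathcomp Require Import all_boot zify.
Set Implicit Arguments. Unset Strict Implicit. Unset Printing Implicit Defensive.

(* Let f be a strongly antimagic labeling of G, p = |V_k|, and rank the
   vertices of V_k by their f-vertex sums (distinct, since f is antimagic).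
   Label the pendant edge vv' by the rank of v (so 1..p) and every old edge by
   its old label plus p. A new vertex v' then has sum rank(v) <= p, while an
   old vertex u has sum phi(u) + p deg(u) + [deg u = k] rank(u), where the last
   term lies in [0, p]. Hence old vertex sums are ordered lexicographically by
   (deg, phi), which is compatible with the new degrees deg u + [deg u = k];
   and every old vertex of positive degree has sum > p, above all new ones,
   while (as k >= 1) an isolated vertex gets no pendant and keeps sum 0. *)

Lemma vsum_deg0 (T : finType) (e : rel T) (f : {set T} -> nat) (u : T) :
  deg e u = 0 -> vsum e f u = 0.
Proof.
move=> /eqP; rewrite cards_eq0 => /eqP/setP noadj.
by rewrite /vsum big_pred0 // => y; have := noadj y; rewrite !inE.
Qed.

Lemma vsum_gt0 (T : finType) (e : rel T) (f : {set T} -> nat) (u : T) :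
  (forall ed, ed \in edges e -> 0 < f ed) -> 0 < deg e u -> 0 < vsum e f u.
Proof.
move=> f_gt0; rewrite card_gt0 => /set0Pn [y]; rewrite inE => euy.
have uy_edge : [set u; y] \in edges e.
  by rewrite inE; apply/existsP; exists u; apply/existsP; exists y; rewrite euy eqxx.
by rewrite /vsum (bigD1 y) //= ltn_addr ?f_gt0.
Qed.

Section PendantExtension.

Variables (T : finType) (e : rel T) (k : nat).

Local Notation Vk := {v : T | deg e v == k}.
Local Notation e' := (ext_rel e k).
Local Notation p := #|{: Vk}|.

Definition pendant_edge (w : Vk) : {set ext_vertex e k} := [set inl (val w); inr w].

Lemma pendant_edge_inj : injective pendant_edge.
Proof.
move=> w1 w2 eq_w; have : inr w1 \in pendant_edge w2 by rewrite -eq_w !inE eqxx orbT.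
by rewrite !inE => /orP [] // /eqP [].
Qed.

Lemma pendant_edge_neq_lift (w : Vk) (s : {set T}) : pendant_edge w != inl @: s.
Proof.
apply/eqP => eq_s; have : inr w \in inl @: s by rewrite -eq_s !inE eqxx orbT.
by case/imsetP.
Qed.

Lemma lift_set2 (a b : T) :
  [set inl a; inl b] = inl @: [set a; b] :> {set ext_vertex e k}.
Proof. by rewrite imsetU1 imset_set1. Qed.

Lemma sum_pendant (F : Vk -> nat) (u : T) :
  \sum_(w : Vk | u == val w) F w = oapp F 0 (insub u).
Proof.
case: insubP => [w _ <-|Nu] /=.
  by rewrite (eq_bigl (pred1 w)) ?big_pred1_eq // => w'; rewrite /= (inj_eq val_inj) eq_sym.
rewrite big_pred0 // => w; apply/negbTE; apply: contra Nu => /eqP ->; exact: (valP w).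
Qed.

Lemma deg_ext_inl (u : T) : deg e' (inl u) = deg e u + (deg e u == k).
Proof.
rewrite [LHS]/deg -sum1_card big_sumType /=; congr (_ + _).
  by rewrite /deg -sum1_card; apply: eq_bigl => y; rewrite !inE.
rewrite (eq_bigl (fun w : Vk => u == val w)) => [|w]; last by rewrite !inE.
by rewrite sum_pendant; case: insubP => [w -> //|/negbTE ->].
Qed.

Lemma deg_ext_inr (w : Vk) : deg e' (inr w) = 1.
Proof.
rewrite /deg -sum1_card big_sumType /= [X in _ + X]big_pred0 => [|w']; last by rewrite !inE.
by rewrite addn0 (eq_bigl (pred1 (val w))) ?big_pred1_eq // => y; rewrite !inE eq_sym.
Qed.

Lemma edges_extP (ed : {set ext_vertex e k}) :
  ed \in edges e' ->
  (exists2 s, s \in edges e & ed = inl @: s) \/ exists w, ed = pendant_edge w.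
Proof.
rewrite inE => /existsP [x /existsP [y /andP [exy /eqP ->]]].
case: x exy => [a|w]; case: y => [b|w'] //= exy.
- left; exists [set a; b]; last exact: lift_set2.
  by rewrite inE; apply/existsP; exists a; apply/existsP; exists b; rewrite exy eqxx.
- by right; exists w'; rewrite (eqP exy).
- by right; exists w; rewrite -(eqP exy) setUC.
Qed.

Lemma card_edges_ext : #|edges e| + p <= #|edges e'|.
Proof.
set lifted := [set (@inl T Vk) @: s | s : {set T} in edges e].
set pendants := [set pendant_edge w | w : Vk].
have card_lifted : #|lifted| = #|edges e|.
  by rewrite card_imset //; apply: imset_inj => x y [].
have card_pendants : #|pendants| = p by rewrite card_imset ?cardsT //; exact: pendant_edge_inj.
have disjoint : [disjoint lifted & pendants].
  apply/pred0P => ed /=; apply/negP => /andP [/imsetP [s _ ->] /imsetP [w _ /eqP]].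
  by rewrite eq_sym (negbTE (pendant_edge_neq_lift _ _)).
have sub : lifted :|: pendants \subset edges e'.
  apply/subsetP => ed; rewrite inE => /orP [/imsetP [s + ->]|/imsetP [w _ ->]].
    rewrite !inE => /existsP [a /existsP [b /andP [eab /eqP ->]]].
    apply/existsP; exists (inl a); apply/existsP; exists (inl b).
    by rewrite /= eab lift_set2 eqxx.
  rewrite inE; apply/existsP; exists (inl (val w)); apply/existsP; exists (inr w).
  by rewrite /= !eqxx.
rewrite -card_lifted -card_pendants -cardsUI (disjoint_setI0 disjoint) cards0 addn0.
exact: subset_leq_card.
Qed.

Section Labeling.

Variable f : {set T} -> nat.

Definition vsum_rank (w : Vk) : nat :=
  #|[set w' : Vk | vsum e f (val w') <= vsum e f (val w)]|.

Definition ext_label (ed : {set ext_vertex e k}) : nat :=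
  if [pick w | ed == pendant_edge w] is Some w then vsum_rank w
  else f [set x | inl x \in ed] + p.

Lemma ext_label_pendant (w : Vk) : ext_label (pendant_edge w) = vsum_rank w.
Proof.
rewrite /ext_label; case: pickP => [w' /eqP/pendant_edge_inj -> //|/(_ w)].
by rewrite eqxx.
Qed.

Lemma ext_label_lift (s : {set T}) : ext_label (inl @: s) = f s + p.
Proof.
rewrite /ext_label; case: pickP => [w /eqP eq_s|_].
  by have := pendant_edge_neq_lift w s; rewrite eq_s eqxx.
congr (f _ + _); apply/setP => x; rewrite inE mem_imset //; exact: inl_inj.
Qed.

Lemma vsum_rank_gt0 (w : Vk) : 0 < vsum_rank w.
Proof. by rewrite card_gt0; apply/set0Pn; exists w; rewrite inE. Qed.

Lemma vsum_rank_le (w : Vk) : vsum_rank w <= p.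
Proof. exact: max_card. Qed.

Lemma vsum_rank_lt (w1 w2 : Vk) :
  vsum e f (val w1) < vsum e f (val w2) -> vsum_rank w1 < vsum_rank w2.
Proof.
move=> lt12; apply: proper_card; apply/properP; split.
  by apply/subsetP => w; rewrite !inE => /leq_trans; apply; apply: ltnW.
by exists w2; rewrite !inE // -ltnNge.
Qed.

Lemma vsum_rank_inj : injective (vsum e f) -> injective vsum_rank.
Proof.
move=> vsum_inj w1 w2 eq_rank; apply: val_inj; apply: vsum_inj.
case: (ltngtP (vsum e f (val w1)) (vsum e f (val w2))) => // /vsum_rank_lt;
  by rewrite eq_rank ltnn.
Qed.

Lemma oapp_vsum_rank_le (u : T) : oapp vsum_rank 0 (insub u) <= p.
Proof. by case: insubP => [w _ _|_] /=; rewrite ?vsum_rank_le. Qed.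

Lemma vsum_ext_inl (u : T) :
  vsum e' ext_label (inl u) =
  vsum e f u + p * deg e u + oapp vsum_rank 0 (insub u).
Proof.
rewrite /vsum big_sumType /= -sum_pendant; congr (_ + _); last first.
  by apply: eq_big => [w|w /eqP ->] //; rewrite ext_label_pendant.
rewrite (eq_bigr (fun y => f [set u; y] + p)) => [|y _]; last first.
  by rewrite lift_set2 ext_label_lift.
rewrite big_split /= mulnC /deg -sum_nat_const; congr (_ + _).
by apply: eq_bigl => y; rewrite inE.
Qed.

Lemma vsum_ext_inr (w : Vk) : vsum e' ext_label (inr w) = vsum_rank w.
Proof.
rewrite /vsum big_sumType /= [X in _ + X]big_pred0 // addn0.
rewrite (eq_bigl (pred1 (val w))) ?big_pred1_eq => [|y]; last by rewrite /= eq_sym.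
by rewrite setUC ext_label_pendant.
Qed.

Section Antimagic.

Hypothesis f_antimagic : strongly_antimagic_labeling e f.
Hypothesis k_gt0 : 0 < k.

Local Notation phi' := (vsum e' ext_label).

Lemma vsum_ext_inl_deg0 (u : T) : deg e u = 0 -> phi' (inl u) = 0.
Proof.
move=> u0; rewrite vsum_ext_inl vsum_deg0 // u0 muln0.
by case: insubP => [w du _|] //=; rewrite u0 eq_sym gtn_eqF in du.
Qed.

Lemma vsum_ext_inl_gt (u : T) : 0 < deg e u -> p < phi' (inl u).
Proof.
case: f_antimagic => [[_ f_range] _ _] u_gt0.
have f_gt0 ed : ed \in edges e -> 0 < f ed by move/f_range/andP => [].
have := vsum_gt0 f_gt0 u_gt0; rewrite vsum_ext_inl.
have : p * 1 <= p * deg e u by rewrite leq_mul2l u_gt0 orbT.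
lia.
Qed.

Lemma vsum_ext_inl_lt_deg (u v : T) :
  deg e u < deg e v -> phi' (inl u) < phi' (inl v).
Proof.
case: f_antimagic => [_ _ f_mono] lt_deg; rewrite !vsum_ext_inl.
have := f_mono _ _ lt_deg; have := oapp_vsum_rank_le u.
have : p * (deg e u).+1 <= p * deg e v by rewrite leq_mul2l lt_deg orbT.
rewrite mulnS; lia.
Qed.

Lemma vsum_ext_inl_lt_vsum (u v : T) :
  deg e u = deg e v -> vsum e f u < vsum e f v -> phi' (inl u) < phi' (inl v).
Proof.
move=> eq_deg lt_vsum; rewrite !vsum_ext_inl eq_deg.
case: insubP => [wu du eq_u|Nu]; case: insubP => [wv dv eq_v|Nv] /=.
- have := @vsum_rank_lt wu wv; rewrite eq_u eq_v => /(_ lt_vsum); lia.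
- by rewrite -eq_deg du in Nv.
- by rewrite eq_deg dv in Nu.
- lia.
Qed.

Lemma vsum_ext_inl_inj : injective (fun u => phi' (inl u)).
Proof.
case: f_antimagic => [_ f_inj _] u v /= eq_phi; apply: f_inj.
case: (ltngtP (deg e u) (deg e v)) => [lt|gt|eq_deg].
- by have := vsum_ext_inl_lt_deg lt; rewrite eq_phi ltnn.
- by have := vsum_ext_inl_lt_deg gt; rewrite eq_phi ltnn.
case: (ltngtP (vsum e f u) (vsum e f v)) => // [lt|gt].
- by have := vsum_ext_inl_lt_vsum eq_deg lt; rewrite eq_phi ltnn.
- by have := vsum_ext_inl_lt_vsum (esym eq_deg) gt; rewrite eq_phi ltnn.
Qed.

Lemma vsum_ext_inl_neq_inr (u : T) (w : Vk) : phi' (inl u) != phi' (inr w).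
Proof.
rewrite vsum_ext_inr; case: (posnP (deg e u)) => [u0|u_gt0].
  by rewrite vsum_ext_inl_deg0 // eq_sym -lt0n vsum_rank_gt0.
by apply: contraTneq (vsum_ext_inl_gt u_gt0) => ->; rewrite -leqNgt vsum_rank_le.
Qed.

Lemma ext_label_edge_labeling : edge_labeling e' ext_label.
Proof.
case: f_antimagic => [[f_inj f_range] vsum_inj _].
have card_ext := card_edges_ext; split.
- move=> ed1 ed2 /edges_extP [[s1 s1E ->]|[w1 ->]] /edges_extP [[s2 s2E ->]|[w2 ->]];
    rewrite ?ext_label_lift ?ext_label_pendant.
  + by move/addIn/(f_inj _ _ s1E s2E) ->.
  + by have := vsum_rank_le w2; have /andP [? _] := f_range _ s1E; lia.
  + by have := vsum_rank_le w1; have /andP [? _] := f_range _ s2E; lia.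
  + by move/(vsum_rank_inj vsum_inj) ->.
- move=> ed /edges_extP [[s sE ->]|[w ->]]; rewrite ?ext_label_lift ?ext_label_pendant.
  + by have /andP [? ?] := f_range _ sE; apply/andP; split; lia.
  + by have := vsum_rank_gt0 w; have := vsum_rank_le w; move=> ? ?; apply/andP; split; lia.
Qed.

Lemma vsum_ext_inj : injective phi'.
Proof.
case: f_antimagic => [_ vsum_inj _] [u|w1] [v|w2] eq_phi.
- by rewrite (vsum_ext_inl_inj eq_phi).
- by have := vsum_ext_inl_neq_inr u w2; rewrite eq_phi eqxx.
- by have := vsum_ext_inl_neq_inr v w1; rewrite eq_phi eqxx.
- by move: eq_phi; rewrite !vsum_ext_inr => /(vsum_rank_inj vsum_inj) ->.
Qed.

Lemma vsum_ext_deg_mono (a b : ext_vertex e k) : deg e' a < deg e' b -> phi' a < phi' b.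
Proof.
case: a b => [u|w1] [v|w2]; rewrite ?deg_ext_inl ?deg_ext_inr ?vsum_ext_inr => lt_deg.
- apply: vsum_ext_inl_lt_deg.
  case: (ltngtP (deg e u) (deg e v)) lt_deg => [//|gt|->]; [lia | by rewrite ltnn].
- have u0 : deg e u = 0 by lia.
  by rewrite vsum_ext_inl_deg0 // vsum_rank_gt0.
- have v_gt0 : 0 < deg e v.
    by case: (posnP (deg e v)) lt_deg => // ->; rewrite add0n eq_sym gtn_eqF.
  exact: leq_ltn_trans (vsum_rank_le w1) (vsum_ext_inl_gt v_gt0).
- by [].
Qed.

End Antimagic.

End Labeling.

End PendantExtension.

Theorem theorem8 (T : finType) (e : rel T) (e_sym : symmetric e)
    (e_irr : irreflexive e) (k : nat) (hk : 1 <= k) :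
  strongly_antimagic e -> strongly_antimagic (ext_rel e k).
Proof.
case=> f f_antimagic; exists (ext_label f); split.
- exact: ext_label_edge_labeling.
- exact: vsum_ext_inj.
- exact: vsum_ext_deg_mono.
Qed.
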